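(* Let $H$ be a Mealy machine from $X$ to $Y$ and $M$ a Mealy machine from $X$ to $Z$ such that for all $\overline{x},\overline{x}'\in X^*$, $\lambda_H(\overline{x})=\lambda_H(\overline{x}')$ implies $\lambda_M(\overline{x})=\lambda_M(\overline{x}')$. Define the observation machine $N$ from $Y$ to $Z$ as follows: $S_N$ is the set of pairs $(s_H,s_M)\in S_H\times S_M$ such that $\delta_H(\overline{x})=s_H$ and $\delta_M(\overline{x})=s_M$ for some $\overline{x}\in X^*$; $r_N=(r_H,r_M)$; for $(s_H,s_M)\in S_N$ and $y\in Y$ let $V=\{x\in X:\lambda_H(s_H,x)=y\}$; if $V=\emptyset$ then $((s_H,s_M),y)\notin D_N$; otherwise $((s_H,s_M),y)\in D_N$, $\lambda_N((s_H,s_M),y)$ is the common value of $\lambda_M(s_M,x)$ for $x\in V$, and $\Delta_N((s_H,s_M),y)=\{(\delta_H(s_H,x),\delta_M(s_M,x)):x\in V\}$. Then $N$ is well defined, and a Mealy machine $T$ from $Y$ to $Z$ satisfies $T\circ H\equiv M$ if and only if $T$ implements $N$.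
   Context: A Mealy machine from $X$ to $Y$ is a tuple $(X,Y,S,\delta,\lambda,r)$ with $\delta:S\times X\to S$, $\lambda:S\times X\to Y$ total; $\delta(\overline{x}),\lambda(\overline{x})$ denote the state reached and output word produced on input $\overline{x}$ from $r$. $T\circ H$ is the cascade: states $S_H\times S_T$, initial $(r_H,r_T)$, and with $y=\lambda_H(s_H,x)$, $\delta((s_H,s_T),x)=(\delta_H(s_H,x),\delta_T(s_T,y))$, $\lambda((s_H,s_T),x)=\lambda_T(s_T,y)$; $\equiv$ means same output on every input word. An observation machine (OM) from $Y$ to $Z$ is a tuple $(Y,Z,S,D,\Delta,\lambda,r)$ with $D\subseteq S\times Y$, $\Delta:D\to 2^S\setminus\{\emptyset\}$, $\lambda:D\to Z$. A run on $y_0\dots y_n$ from $s_0$ is $s_0,y_0,z_0,s_1,\dots,s_{n+1}$ with $(s_i,y_i)\in D$, $s_{i+1}\in\Delta(s_i,y_i)$, $z_i=\lambda(s_i,y_i)$; $\Omega_N$ is the set of words having a run from $r$; when all runs from $r$ on each $\overline{y}\in\Omega_N$ have the same output $\lambda_N(\overline{y})$, a Mealy machine $T$ implements $N$ if $\lambda_T(\overline{y})=\lambda_N(\overline{y})$ for all $\overline{y}\in\Omega_N$. *)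

From Stdlib Require Import List ClassicalEpsilon.
Import ListNotations.
Set Implicit Arguments.

Record Mealy (X Y : Type) := {
  mstate : Type;
  mdelta : mstate -> X -> mstate;
  mlambda : mstate -> X -> Y;
  mroot : mstate }.
Arguments mstate {X Y}. Arguments mdelta {X Y}. Arguments mlambda {X Y}.
Arguments mroot {X Y}.

Fixpoint dstar {X Y} (M : Mealy X Y) (s : mstate M) (xs : list X) : mstate M :=
  match xs with [] => s | x :: xs' => dstar M (mdelta M s x) xs' end.
Fixpoint lstar {X Y} (M : Mealy X Y) (s : mstate M) (xs : list X) : list Y :=
  match xs with
  | [] => []
  | x :: xs' => mlambda M s x :: lstar M (mdelta M s x) xs'
  end.

Definition reach {X Y} (M : Mealy X Y) (xs : list X) := dstar M (mroot M) xs.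
Definition out {X Y} (M : Mealy X Y) (xs : list X) := lstar M (mroot M) xs.

Definition cascade {X Y Z} (T : Mealy Y Z) (H : Mealy X Y) : Mealy X Z := {|
  mstate := mstate H * mstate T;
  mdelta := fun p x => (mdelta H (fst p) x, mdelta T (snd p) (mlambda H (fst p) x));
  mlambda := fun p x => mlambda T (snd p) (mlambda H (fst p) x);
  mroot := (mroot H, mroot T) |}.

Definition mequiv {X Z} (M1 M2 : Mealy X Z) : Prop :=
  forall xs, out M1 xs = out M2 xs.

(** Observation machines (Y, Z, S, D, Delta, lambda, r):
    D subset of S x Y, Delta : D -> nonempty subsets of S, lambda : D -> Z. *)
Record OM (Y Z : Type) := {
  ostate : Type;
  oD : ostate -> Y -> Prop;
  oDelta : ostate -> Y -> ostate -> Prop;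
  olambda : forall s y, oD s y -> Z;
  oroot : ostate;
  oDelta_ne : forall s y, oD s y -> exists s', oDelta s y s' }.
Arguments ostate {Y Z}. Arguments oD {Y Z}. Arguments oDelta {Y Z}.
Arguments olambda {Y Z}. Arguments oroot {Y Z}.

Inductive orun {Y Z} (N : OM Y Z) : ostate N -> list Y -> list Z -> Prop :=
| orun_nil s : orun N s [] []
| orun_cons s y ys z zs s' (h : oD N s y) :
    z = olambda N s y h -> oDelta N s y s' -> orun N s' ys zs ->
    orun N s (y :: ys) (z :: zs).

Definition Omega {Y Z} (N : OM Y Z) (ys : list Y) : Prop :=
  exists zs, orun N (oroot N) ys zs.

Definition out_determined {Y Z} (N : OM Y Z) : Prop :=
  forall ys zs zs', orun N (oroot N) ys zs -> orun N (oroot N) ys zs' -> zs = zs'.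

(** T implements N: lambda_T(ys) = lambda_N(ys) for all ys in Omega_N,
    where lambda_N(ys) is the output of (any) run of N from r on ys. *)
Definition implements {Y Z} (T : Mealy Y Z) (N : OM Y Z) : Prop :=
  forall ys zs, orun N (oroot N) ys zs -> out T ys = zs.

Section ObsN.
Variables (X Y Z : Type) (H : Mealy X Y) (M : Mealy X Z).

Definition reachable (p : mstate H * mstate M) : Prop :=
  exists xs, reach H xs = fst p /\ reach M xs = snd p.

Definition SN := { p : mstate H * mstate M | reachable p }.

Definition rootN : SN :=
  exist _ (mroot H, mroot M) (ex_intro _ [] (conj eq_refl eq_refl)).

Definition DN (s : SN) (y : Y) : Prop :=
  exists x, mlambda H (fst (proj1_sig s)) x = y.

Definition DeltaN (s : SN) (y : Y) (t : SN) : Prop :=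
  exists x, mlambda H (fst (proj1_sig s)) x = y /\
    proj1_sig t = (mdelta H (fst (proj1_sig s)) x, mdelta M (snd (proj1_sig s)) x).

(** lambda_N(s, y) := lambda_M(s_M, x) for some x in V (the statement asserts
    that this value does not depend on the choice of x). *)
Definition lamN (s : SN) (y : Y) (h : DN s y) : Z :=
  mlambda M (snd (proj1_sig s)) (proj1_sig (constructive_indefinite_description _ h)).

Lemma dstar_snoc {A B} (K : Mealy A B) s xs x :
  dstar K s (xs ++ [x]) = mdelta K (dstar K s xs) x.
Proof. revert s; induction xs as [|a xs IH]; intro s; simpl; auto. Qed.

Lemma DeltaN_ne : forall s y, DN s y -> exists t, DeltaN s y t.
Proof.
  intros [[sH sM] [xs [E1 E2]]] y [x Hx]; simpl in *.
  assert (R : reachable (mdelta H sH x, mdelta M sM x)).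
  { exists (xs ++ [x]); unfold reach in *; simpl.
    rewrite !dstar_snoc, E1, E2; split; reflexivity. }
  exists (exist _ _ R); exists x; simpl; split; auto.
Qed.

Definition obsN : OM Y Z := {|
  ostate := SN; oD := DN; oDelta := DeltaN; olambda := lamN;
  oroot := rootN; oDelta_ne := DeltaN_ne |}.

End ObsN.
Arguments obsN {X Y Z}.

(* A state of N has the form (δ_H(x̄), δ_M(x̄)).  Two letters leaving it with
   the same H-output extend x̄ to words with equal λ_H, hence, by the
   hypothesis, equal λ_M: this makes λ_N well defined.  Consequently the runs
   of N from r_N are exactly the pairs (λ_H(x̄), λ_M(x̄)), so their outputs on
   a word agree by the hypothesis, and T implements N iff λ_T(λ_H(x̄)) = λ_M(x̄)
   for every x̄, i.e. iff T ∘ H ≡ M. *)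

From Stdlib Require Import List.
Import ListNotations.

Lemma lstar_snoc {A B} (K : Mealy A B) s xs x :
  lstar K s (xs ++ [x]) = lstar K s xs ++ [mlambda K (dstar K s xs) x].
Proof.
  revert s; induction xs as [|a xs IH]; intro s; simpl; [reflexivity|].
  now rewrite IH.
Qed.

Lemma lstar_cascade {X Y Z} (T : Mealy Y Z) (H : Mealy X Y) xs :
  forall sH sT, lstar (cascade T H) (sH, sT) xs = lstar T sT (lstar H sH xs).
Proof.
  induction xs as [|x xs IH]; intros sH sT; simpl; [reflexivity|].
  now rewrite IH.
Qed.

Lemma out_cascade {X Y Z} (T : Mealy Y Z) (H : Mealy X Y) xs :
  out (cascade T H) xs = out T (out H xs).
Proof. apply lstar_cascade. Qed.

Section ObservationMachine.
Variables (X Y Z : Type) (H : Mealy X Y) (M : Mealy X Z).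
Hypothesis hHM : forall xs xs' : list X, out H xs = out H xs' -> out M xs = out M xs'.

Notation sH s := (fst (proj1_sig s)).
Notation sM s := (snd (proj1_sig s)).

Lemma reachable_step (p : mstate H * mstate M) x :
  reachable H M p -> reachable H M (mdelta H (fst p) x, mdelta M (snd p) x).
Proof.
  intros [xs [E1 E2]]; exists (xs ++ [x]); unfold reach in *; simpl.
  now rewrite !dstar_snoc, E1, E2.
Qed.

Definition stepN (s : SN H M) (x : X) : SN H M :=
  exist _ _ (@reachable_step (proj1_sig s) x (proj2_sig s)).

Lemma obsN_lambda_wd (s : SN H M) x x' :
  mlambda H (sH s) x = mlambda H (sH s) x' ->
  mlambda M (sM s) x = mlambda M (sM s) x'.
Proof.
  destruct s as [[h m] [xs [E1 E2]]]; simpl in *; intro Ex.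
  assert (Hout : out H (xs ++ [x]) = out H (xs ++ [x'])).
  { unfold out, reach in *; now rewrite !lstar_snoc, E1, Ex. }
  apply hHM in Hout; unfold out, reach in *.
  rewrite !lstar_snoc, E2 in Hout.
  apply app_inj_tail in Hout; now destruct Hout.
Qed.

Lemma lamN_eq {s : SN H M} {y} (h : DN s y) x :
  mlambda H (sH s) x = y -> lamN h = mlambda M (sM s) x.
Proof.
  intro Ex; unfold lamN.
  destruct (ClassicalEpsilon.constructive_indefinite_description _ h) as [x0 Hx0]; simpl.
  apply obsN_lambda_wd; congruence.
Qed.

Lemma orun_obsN_lstar (s : SN H M) ys zs :
  orun (obsN H M) s ys zs ->
  exists xs, lstar H (sH s) xs = ys /\ lstar M (sM s) xs = zs.
Proof.
  induction 1 as [s|s y ys z zs s' h Ez [x [Hx Et]] _ [xs [E1 E2]]].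
  - now exists [].
  - exists (x :: xs); simpl in *.
    rewrite Et in E1, E2; simpl in E1, E2.
    rewrite Hx, E1, E2, Ez, (lamN_eq h x Hx); split; reflexivity.
Qed.

Lemma lstar_orun_obsN xs : forall s : SN H M,
  orun (obsN H M) s (lstar H (sH s) xs) (lstar M (sM s) xs).
Proof.
  induction xs as [|x xs IH]; intro s; simpl; [constructor|].
  assert (h : DN s (mlambda H (sH s) x)) by now exists x.
  apply (@orun_cons _ _ (obsN H M) s _ _ _ _ (stepN s x) h).
  - symmetry; now apply lamN_eq.
  - now exists x.
  - apply IH.
Qed.

Lemma orun_obsN_root ys zs :
  orun (obsN H M) (oroot (obsN H M)) ys zs <-> exists xs, out H xs = ys /\ out M xs = zs.
Proof.
  split.
  - apply orun_obsN_lstar.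
  - intros [xs [<- <-]]; apply (lstar_orun_obsN xs (rootN H M)).
Qed.

End ObservationMachine.

Theorem proposition2 (X Y Z : Type) (H : Mealy X Y) (M : Mealy X Z)
  (hHM : forall xs xs' : list X, out H xs = out H xs' -> out M xs = out M xs') :
  (* N is well defined: lambda_N is independent of the choice of x in V ... *)
  (forall (s : ostate (obsN H M)) (y : Y) (x x' : X),
      mlambda H (fst (proj1_sig s)) x = y ->
      mlambda H (fst (proj1_sig s)) x' = y ->
      mlambda M (snd (proj1_sig s)) x = mlambda M (snd (proj1_sig s)) x') /\
  (* ... and all runs from r_N on a word have the same output *)
  out_determined (obsN H M) /\
  (forall T : Mealy Y Z, mequiv (cascade T H) M <-> implements T (obsN H M)).
Proof.
  pose proof (@orun_obsN_root X Y Z H M hHM) as runs.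
  split; [|split].
  - intros s y x x' Ex Ex'; apply (@obsN_lambda_wd X Y Z H M hHM); congruence.
  - intros ys zs zs' [xs [<- <-]]%runs [xs' [E <-]]%runs.
    symmetry; exact (hHM _ _ E).
  - intro T; split.
    + intros Heq ys zs [xs [<- <-]]%runs.
      now rewrite <- out_cascade.
    + intros Him xs; rewrite out_cascade.
      apply Him, runs; now exists xs.
Qed.
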